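(* Let $R$ be a hyperring such that $X=\operatorname{Spec}R$ is irreducible. Then the presheaf $\mathcal{F}_X$ on $X$ is a sheaf of hyperrings.
   Context: Hyperring: a set with a hyperoperation $+:R\times R\to\mathcal{P}^*(R)$ (nonempty subsets; extended to subsets by $A+B=\bigcup a+b$) making $(R,+,0)$ a canonical hypergroup (commutative, associative, unique $0$ with $0+x=\{x\}$, unique $-x$ with $0\in x+(-x)$, and $x\in y+z\iff z\in x+(-y)$), and a commutative monoid $(R,\cdot,1)$, with $x(y+z)=xy+xz$, $0x=0$, $0\neq1$. $\operatorname{Spec}R$ is the set of prime hyperideals with the Zariski topology (closed sets $V(I)=\{\mathfrak{p}\supseteq I\}$ for hyperideals $I$). Let $S$ be the set of elements of $R$ that are not zero-divisors (i.e. $s$ with $sx=0\Rightarrow x=0$), a multiplicative submonoid, and $K=S^{-1}R$ the localization: $R\times S$ modulo $(r_1,s_1)\sim(r_2,s_2)\iff xr_1s_2=xr_2s_1$ for some $x\in S$, with $\frac{r_1}{s_1}+\frac{r_2}{s_2}=\{\frac{y}{s_1s_2}\mid y\in r_1s_2+s_1r_2\}$ and componentwise multiplication. For open $U\subseteq X$, $\mathcal{F}_X(U):=\{u\in K\mid\text{for every }\mathfrak{p}\in U,\ u=\frac ab\text{ for some }a\in R,\ b\in S\setminus\mathfrak{p}\}$, a sub-hyperring of $K$; for $V\subseteq U$ the restriction map is the inclusion $\mathcal{F}_X(U)\hookrightarrow\mathcal{F}_X(V)$. *)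

(** * Hyperrings.  [hadd x y z] means  z ∈ x + y. *)
Record hyperring := HyperRing {
  carrier :> Type;
  hadd : carrier -> carrier -> carrier -> Prop;
  hzero : carrier;
  hneg : carrier -> carrier;
  hmul : carrier -> carrier -> carrier;
  hone : carrier;
  hadd_nonempty : forall x y, exists z, hadd x y z;
  hadd_comm : forall x y z, hadd x y z <-> hadd y x z;
  hadd_assoc : forall x y z w,
      (exists u, hadd x y u /\ hadd u z w) <-> (exists v, hadd y z v /\ hadd x v w);
  hadd_zero : forall x z, hadd hzero x z <-> z = x;
  hzero_unique : forall e, (forall x z, hadd e x z <-> z = x) -> e = hzero;
  hneg_spec : forall x, hadd x (hneg x) hzero;
  hneg_unique : forall x y, hadd x y hzero -> y = hneg x;
  hadd_rev : forall x y z, hadd y z x <-> hadd x (hneg y) z;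
  hmul_assoc : forall x y z, hmul x (hmul y z) = hmul (hmul x y) z;
  hmul_comm : forall x y, hmul x y = hmul y x;
  hmul_one : forall x, hmul hone x = x;
  hmul_distr : forall x y z w,
      (exists u, hadd y z u /\ w = hmul x u) <-> hadd (hmul x y) (hmul x z) w;
  hmul_zero : forall x, hmul hzero x = hzero;
  hzero_neq_one : hzero <> hone
}.

Arguments hadd {_}. Arguments hzero {_}. Arguments hneg {_}.
Arguments hmul {_}. Arguments hone {_}.

Section HR.
Variable R : hyperring.

Definition hyperideal (I : R -> Prop) : Prop :=
  (exists a, I a) /\
  (forall a b c, I a -> I b -> hadd a (hneg b) c -> I c) /\
  (forall r a, I a -> I (hmul r a)).

Definition prime_hyperideal (P : R -> Prop) : Prop :=
  hyperideal P /\ ~ P hone /\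
  (forall a b, P (hmul a b) -> P a \/ P b).

(** Points of X = Spec R are prime hyperideals; subsets of X are predicates
    on [R -> Prop] (only prime hyperideals are ever members). *)
Definition V (I : R -> Prop) : (R -> Prop) -> Prop :=
  fun p => prime_hyperideal p /\ (forall a, I a -> p a).

Definition is_closed (C : (R -> Prop) -> Prop) : Prop :=
  exists I, hyperideal I /\ forall p, C p <-> V I p.

Definition is_open (U : (R -> Prop) -> Prop) : Prop :=
  exists I, hyperideal I /\ forall p, U p <-> (prime_hyperideal p /\ ~ V I p).

Definition spec_irreducible : Prop :=
  (exists p, prime_hyperideal p) /\
  forall C1 C2, is_closed C1 -> is_closed C2 ->
    (forall p, prime_hyperideal p -> C1 p \/ C2 p) ->
    (forall p, prime_hyperideal p -> C1 p) \/ (forall p, prime_hyperideal p -> C2 p).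

Definition nzd (s : R) : Prop := forall x, hmul s x = hzero -> x = hzero.

(** Fractions r/s (s ∈ S) and the equivalence defining K = S^{-1} R. *)
Definition frac := (R * R)%type.
Definition is_frac (u : frac) : Prop := nzd (snd u).
Definition frac_eq (u v : frac) : Prop :=
  exists x, nzd x /\ hmul x (hmul (fst u) (snd v)) = hmul x (hmul (fst v) (snd u)).

(** F_X(U) as a (~-closed) set of fractions, i.e. a subset of K. *)
Definition F (U : (R -> Prop) -> Prop) (u : frac) : Prop :=
  is_frac u /\
  forall p, U p -> exists a b, nzd b /\ ~ p b /\ frac_eq u (a, b).

(** F_X(U) is a sub-hyperring of K (closed under 0, 1, -, ., and hyperaddition
    u + v = { y/(s1 s2) | y ∈ r1 s2 + s1 r2 }). *)
Definition sub_hyperring_K (A : frac -> Prop) : Prop :=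
  A (hzero, hone) /\ A (hone, hone) /\
  (forall u, A u -> A (hneg (fst u), snd u)) /\
  (forall u v, A u -> A v -> A (hmul (fst u) (fst v), hmul (snd u) (snd v))) /\
  (forall u v y, A u -> A v ->
      hadd (hmul (fst u) (snd v)) (hmul (snd u) (fst v)) y ->
      A (y, hmul (snd u) (snd v))).

(** Equality of sections over V, i.e. in F(V) ⊆ K; by the usual convention
    F(∅) is the terminal (zero) hyperring, so any two sections over ∅ agree. *)
Definition sec_eq (W : (R -> Prop) -> Prop) (u v : frac) : Prop :=
  (forall p, ~ W p) \/ frac_eq u v.

(** Sheaf condition for F_X (restriction maps are the inclusions). *)
Definition F_is_sheaf : Prop :=
  forall (U : (R -> Prop) -> Prop) (I : Type) (Ui : I -> (R -> Prop) -> Prop),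
    is_open U -> (forall i, is_open (Ui i)) ->
    (forall p, U p <-> exists i, Ui i p) ->
    (forall s t, F U s -> F U t -> (forall i, sec_eq (Ui i) s t) -> sec_eq U s t) /\
    (forall s : I -> frac, (forall i, F (Ui i) (s i)) ->
       (forall i j, sec_eq (fun p => Ui i p /\ Ui j p) (s i) (s j)) ->
       exists t, F U t /\ forall i, sec_eq (Ui i) t (s i)).

Definition F_is_sheaf_of_hyperrings : Prop :=
  (forall U, is_open U -> sub_hyperring_K (F U)) /\ F_is_sheaf.

End HR.

(* The algebraic half is local: near a prime p, sections are fractions with
   denominators outside p, and sums, products and opposites of such fractions
   again have denominators outside p because p is prime.  The sheaf half uses
   irreducibility: any two nonempty open subsets of Spec R meet, so sections
   that agree on all pairwise overlaps are one and the same element of K,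
   which then glues. *)

From Corelib Require Import ssreflect.
From Stdlib Require Import Classical.

Section MulMonoid.
Context {R : hyperring}.

Lemma hmulCA (x y z : R) : hmul x (hmul y z) = hmul y (hmul x z).
Proof. by rewrite !hmul_assoc (hmul_comm _ x y). Qed.

Lemma hmulr0 (x : R) : hmul x hzero = hzero.
Proof. by rewrite hmul_comm hmul_zero. Qed.

Lemma hmulrN (x y : R) : hmul x (hneg y) = hneg (hmul x y).
Proof.
apply: hneg_unique; apply/hmul_distr.
by exists hzero; split; [apply: hneg_spec | rewrite hmulr0].
Qed.

Lemma hmulNr (x y : R) : hmul (hneg x) y = hneg (hmul x y).
Proof. by rewrite hmul_comm hmulrN hmul_comm. Qed.

End MulMonoid.

(* [hmul_ac] proves equalities between products that agree up to
   associativity and commutativity: it right-nests both sides and then moves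
   each factor of the left-hand side to the front of the right-hand side. *)
Ltac hmul_bring_front a r :=
  lazymatch r with
  | hmul a _ => constr:(@eq_refl _ r)
  | hmul ?b a => constr:(hmul_comm _ a b)
  | hmul ?b ?r' =>
      let p := hmul_bring_front a r' in
      lazymatch type of p with
      | hmul a ?z = _ => constr:(eq_trans (hmulCA a b z) (f_equal (hmul b) p))
      end
  end.

Ltac hmul_match_factors :=
  lazymatch goal with
  | |- ?l = ?l => reflexivity
  | |- hmul ?a ?l = ?r =>
      let p := hmul_bring_front a r in
      refine (eq_trans _ p); apply: (f_equal (hmul a)); hmul_match_factors
  end.

Ltac hmul_ac := repeat rewrite -hmul_assoc; hmul_match_factors.

Section Fractions.
Context {R : hyperring}.

Lemma nzd1 : nzd R hone.
Proof. by move=> x; rewrite hmul_one. Qed.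

Lemma nzdM (a b : R) : nzd R a -> nzd R b -> nzd R (hmul a b).
Proof. by move=> Ha Hb x; rewrite -hmul_assoc => /Ha /Hb. Qed.

Lemma prime_notin_mul {p : R -> Prop} {a b : R} :
  prime_hyperideal R p -> ~ p a -> ~ p b -> ~ p (hmul a b).
Proof. by move=> [_ [_ Hp]] Ha Hb /Hp []. Qed.

Definition frac_neg (u : frac R) : frac R := (hneg (fst u), snd u).

Definition frac_mul (u v : frac R) : frac R :=
  (hmul (fst u) (fst v), hmul (snd u) (snd v)).

Lemma frac_eq_refl (u : frac R) : frac_eq R u u.
Proof. by exists hone; split; [apply: nzd1 |]. Qed.

Lemma frac_eq_trans {u v w : frac R} :
  is_frac R v -> frac_eq R u v -> frac_eq R v w -> frac_eq R u w.
Proof.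
case: u v w => [r1 s1] [r2 s2] [r3 s3]; rewrite /is_frac /=.
move=> Hs2 [x [Hx E12]] [y [Hy E23]]; simpl in *.
exists (hmul (hmul x y) s2); split; first by apply: nzdM; [apply: nzdM|].
rewrite /=.
transitivity (hmul (hmul x (hmul r1 s2)) (hmul y s3)); first by hmul_ac.
rewrite E12.
transitivity (hmul (hmul y (hmul r2 s3)) (hmul x s1)); first by hmul_ac.
by rewrite E23; hmul_ac.
Qed.

Lemma frac_eqN {u v : frac R} :
  frac_eq R u v -> frac_eq R (frac_neg u) (frac_neg v).
Proof.
move=> [x [Hx E]]; exists x; split => //=.
by rewrite !hmulNr !hmulrN E.
Qed.

Lemma frac_eqM {u u' v v' : frac R} :
  frac_eq R u v -> frac_eq R u' v' ->
  frac_eq R (frac_mul u u') (frac_mul v v').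
Proof.
case: u u' v v' => [r s] [r' s'] [a b] [a' b'].
move=> [x [Hx E]] [x' [Hx' E']]; simpl in *.
exists (hmul x x'); split; first by apply: nzdM.
rewrite /=.
transitivity (hmul (hmul x (hmul r b)) (hmul x' (hmul r' b'))); first by hmul_ac.
by rewrite E E'; hmul_ac.
Qed.

Lemma frac_eqD {r s r' s' a b a' b' y : R} :
  frac_eq R (r, s) (a, b) -> frac_eq R (r', s') (a', b') ->
  hadd (hmul r s') (hmul s r') y ->
  exists c, hadd (hmul a b') (hmul b a') c /\
            frac_eq R (y, hmul s s') (c, hmul b b').
Proof.
move=> [x [Hx E]] [x' [Hx' E']] Hy; simpl in *.
set M := hmul (hmul x x') (hmul b b').
set N := hmul (hmul x x') (hmul s s').
have EM1 : hmul M (hmul r s') = hmul N (hmul a b').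
  rewrite /M /N.
  transitivity (hmul (hmul x (hmul r b)) (hmul x' (hmul b' s'))); first by hmul_ac.
  by rewrite E; hmul_ac.
have EM2 : hmul M (hmul s r') = hmul N (hmul b a').
  rewrite /M /N.
  transitivity (hmul (hmul x' (hmul r' b')) (hmul x (hmul b s))); first by hmul_ac.
  by rewrite E'; hmul_ac.
have : hadd (hmul N (hmul a b')) (hmul N (hmul b a')) (hmul M y).
  by rewrite -EM1 -EM2; apply/hmul_distr; exists y.
move=> /hmul_distr [c [Hc EMN]].
exists c; split => //; exists (hmul x x'); split; first by apply: nzdM.
rewrite /=.
transitivity (hmul (hmul (hmul x x') (hmul b b')) y); first by hmul_ac.
by rewrite -/M EMN /N; hmul_ac.
Qed.

End Fractions.

Section SubHyperring.
Context {R : hyperring}.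
Variable U : (R -> Prop) -> Prop.
Hypothesis HU : is_open R U.

Lemma is_open_prime {p : R -> Prop} : U p -> prime_hyperideal R p.
Proof. by case: HU => I [_ HI] /HI []. Qed.

Lemma F_frac1 (r : R) : F R U (r, hone).
Proof.
split; first exact: nzd1.
move=> p /is_open_prime [_ [Hp1 _]].
by exists r, hone; split; [apply: nzd1 | split; [| apply: frac_eq_refl]].
Qed.

Lemma F_neg (u : frac R) : F R U u -> F R U (frac_neg u).
Proof.
move=> [Hu Hloc]; split => // p /Hloc [a [b [Hb [Hpb E]]]].
by exists (hneg a), b; split; [| split; [| exact: (frac_eqN E)]].
Qed.

Lemma F_mul (u v : frac R) : F R U u -> F R U v -> F R U (frac_mul u v).
Proof.
move=> [Hu Hlu] [Hv Hlv]; split; first exact: nzdM.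
move=> p Up.
have [a [b [Hb [Hpb E]]]] := Hlu p Up.
have [a' [b' [Hb' [Hpb' E']]]] := Hlv p Up.
exists (hmul a a'), (hmul b b'); split; [| split].
- exact: nzdM.
- exact: prime_notin_mul (is_open_prime Up) Hpb Hpb'.
- exact: (frac_eqM E E').
Qed.

Lemma F_add (u v : frac R) (y : R) :
  F R U u -> F R U v ->
  hadd (hmul (fst u) (snd v)) (hmul (snd u) (fst v)) y ->
  F R U (y, hmul (snd u) (snd v)).
Proof.
case: u v => [r s] [r' s'] [Hu Hlu] [Hv Hlv] Hy; split; first exact: nzdM.
move=> p Up.
have [a [b [Hb [Hpb E]]]] := Hlu p Up.
have [a' [b' [Hb' [Hpb' E']]]] := Hlv p Up.
have [c [_ Ec]] := frac_eqD E E' Hy.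
exists c, (hmul b b'); split; [| split] => //.
- exact: nzdM.
- exact: prime_notin_mul (is_open_prime Up) Hpb Hpb'.
Qed.

Lemma F_sub_hyperring : sub_hyperring_K R (F R U).
Proof.
split; first exact: F_frac1.
split; first exact: F_frac1.
split; first exact: F_neg.
split; first exact: F_mul.
exact: F_add.
Qed.

End SubHyperring.

Section Sheaf.
Context {R : hyperring}.

Lemma sec_eq_intro (W : (R -> Prop) -> Prop) (u v : frac R) :
  (forall p, W p -> frac_eq R u v) -> sec_eq R W u v.
Proof.
move=> Huv; case: (classic (exists p, W p)) => [[p /Huv] | HW]; first by right.
by left => p Wp; apply: HW; exists p.
Qed.

Lemma sec_eq_frac_eq {W : (R -> Prop) -> Prop} {u v : frac R} {p : R -> Prop} :
  W p -> sec_eq R W u v -> frac_eq R u v.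
Proof. by move=> Wp [HW | //]; case: (HW p). Qed.

Lemma F_frac_eq {W : (R -> Prop) -> Prop} {u v : frac R} :
  is_frac R u -> frac_eq R u v -> F R W v -> F R W u.
Proof.
move=> Hu Euv [Hv Hloc]; split => // p /Hloc [a [b [Hb [Hpb E]]]].
by exists a, b; split; [| split; [| apply: frac_eq_trans Euv E]].
Qed.

Lemma F_cover (U : (R -> Prop) -> Prop) (u : frac R) :
  is_frac R u -> (forall p, U p -> exists W, W p /\ F R W u) -> F R U u.
Proof.
move=> Hu Hcov; split => // p /Hcov [W [Wp [_ Hloc]]].
exact: Hloc.
Qed.

Lemma irreducible_open_meet {U1 U2 : (R -> Prop) -> Prop} {p1 p2 : R -> Prop} :
  spec_irreducible R -> is_open R U1 -> is_open R U2 -> U1 p1 -> U2 p2 ->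
  exists p, U1 p /\ U2 p.
Proof.
move=> [_ Hirr] [I1 [HI1 E1]] [I2 [HI2 E2]] /E1 [P1 N1] /E2 [P2 N2].
apply: NNPP => Hdisj.
have Hcov p : prime_hyperideal R p -> V R I1 p \/ V R I2 p.
  move=> Pp; apply: NNPP => /not_or_and [NV1 NV2].
  by apply: Hdisj; exists p; split; [apply/E1 | apply/E2].
have HV I : hyperideal R I -> is_closed R (V R I) by exists I.
case: (Hirr _ _ (HV _ HI1) (HV _ HI2) Hcov) => HVall.
- exact: N1 (HVall _ P1).
- exact: N2 (HVall _ P2).
Qed.

Lemma F_locality {U : (R -> Prop) -> Prop} {I : Type}
    {Ui : I -> (R -> Prop) -> Prop} {s t : frac R} :
  (forall p, U p <-> exists i, Ui i p) ->
  (forall i, sec_eq R (Ui i) s t) -> sec_eq R U s t.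
Proof.
move=> Hcov Hst; apply: sec_eq_intro => p /Hcov [i Hi].
exact: sec_eq_frac_eq Hi (Hst i).
Qed.

Lemma F_gluing {U : (R -> Prop) -> Prop} {I : Type}
    {Ui : I -> (R -> Prop) -> Prop} {s : I -> frac R} :
  spec_irreducible R -> is_open R U -> (forall i, is_open R (Ui i)) ->
  (forall p, U p <-> exists i, Ui i p) ->
  (forall i, F R (Ui i) (s i)) ->
  (forall i j, sec_eq R (fun p => Ui i p /\ Ui j p) (s i) (s j)) ->
  exists t, F R U t /\ forall i, sec_eq R (Ui i) t (s i).
Proof.
move=> Hirr HU HUi Hcov Hs Hcomp.
case: (classic (exists p, U p)) => [[p0 /Hcov [i0 Hi0]] | HU0].
- have Hagree i p : Ui i p -> frac_eq R (s i0) (s i).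
    move=> Hp; have [q Hq] := irreducible_open_meet Hirr (HUi i0) (HUi i) Hi0 Hp.
    exact: sec_eq_frac_eq Hq (Hcomp i0 i).
  exists (s i0); split.
  + apply: F_cover; first exact: (proj1 (Hs i0)).
    move=> p /Hcov [j Hj]; exists (Ui j); split => //.
    exact: F_frac_eq (proj1 (Hs i0)) (Hagree j p Hj) (Hs j).
  + by move=> i; apply: sec_eq_intro => p /Hagree.
- exists (hzero, hone); split; first exact: F_frac1.
  move=> i; left => p Hp; apply: HU0; exists p.
  by apply/Hcov; exists i.
Qed.

End Sheaf.

Theorem proposition4p28 (R : hyperring) :
  spec_irreducible R -> F_is_sheaf_of_hyperrings R.
Proof.
move=> Hirr; split; first by move=> U HU; apply: F_sub_hyperring.
move=> U I Ui HU HUi Hcov; split.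
- by move=> s t _ _; apply: F_locality Hcov.
- by move=> s; apply: F_gluing Hirr HU HUi Hcov.
Qed.
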